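(* If a Riordan matrix $(g,f)$ has a type-I $B$-sequence, then it belongs to $R_{0,2}$, the set of Riordan matrices whose $A$-sequence $(a_j)_{j\ge0}$ satisfies $a_0=1$ and $a_2=0$ (which is a subgroup of the Riordan group).
   Context: Let $K$ be $\mathbb{R}$ or $\mathbb{C}$. A (proper) Riordan matrix is a pair $(g,f)$ of formal power series in $K[[t]]$ with $g(0)=1$, $f(0)=0$, $f'(0)\neq 0$, identified with the infinite lower triangular matrix $(d_{n,k})_{n,k\ge0}$, $d_{n,k}=[t^n]g(t)f(t)^k$; we set $d_{n,k}=0$ if $n<0$, $k<0$ or $k>n$. The $A$-sequence $(a_j)_{j\ge0}$ is the unique sequence whose generating function $A(t)$ satisfies $f(t)=tA(f(t))$. A type-I $B$-sequence of $(g,f)$ is a sequence $(b_j)_{j\ge0}$ such that $d_{n+1,k}=d_{n,k-1}+\sum_{j\ge0}b_j d_{n-j,k+j}$ for all $n\ge0$ and $k\ge1$. *)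

From HB Require Import structures.
From mathcomp Require Import all_boot all_order all_algebra.
Set Implicit Arguments. Unset Strict Implicit. Unset Printing Implicit Defensive.
Import Order.TTheory GRing.Theory Num.Theory.
Local Open Scope ring_scope.

(* A formal power series sum_n s n t^n is represented by its coefficient sequence. *)
Definition fps (K : Type) := nat -> K.

Definition fps_mul (K : nzRingType) (p q : fps K) : fps K :=
  fun n => \sum_(i < n.+1) p i * q (n - i)%N.

Definition fps_one (K : nzRingType) : fps K := fun n => if n == 0%N then 1 else 0.

Fixpoint fps_exp (K : nzRingType) (f : fps K) (k : nat) : fps K :=
  match k with
  | 0 => fps_one K
  | k'.+1 => fps_mul f (fps_exp f k')
  end.

Definition is_riordan (K : nzRingType) (g f : fps K) : Prop :=
  g 0%N = 1 /\ f 0%N = 0 /\ f 1%N != 0.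

(* Entries d_{n,k} = [t^n] g(t) f(t)^k of the Riordan matrix (g, f).
   For k > n this is automatically 0 since f(0) = 0. *)
Definition riordan_entry (K : nzRingType) (g f : fps K) (n k : nat) : K :=
  fps_mul g (fps_exp f k) n.

(* a is the A-sequence of f:  f(t) = t A(f(t)), i.e. coefficientwise
   f_0 = 0 and f_{n+1} = sum_j a_j [t^n] f(t)^j; since f(0)=0, f^j has order
   >= j, so only j <= n contribute. *)
Definition is_Aseq (K : nzRingType) (f : fps K) (a : nat -> K) : Prop :=
  f 0%N = 0 /\
  forall n : nat, f n.+1 = \sum_(j < n.+1) a j * fps_exp f j n.

(* b is a type-I B-sequence of (g, f):
   d_{n+1,k} = d_{n,k-1} + sum_{j>=0} b_j d_{n-j,k+j}  for all n >= 0, k >= 1,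
   where d_{m,l} = 0 for m < 0, so only j <= n contribute. *)
Definition is_typeI_Bseq (K : nzRingType) (g f : fps K) (b : nat -> K) : Prop :=
  forall n k : nat, (1 <= k)%N ->
    riordan_entry g f n.+1 k =
      riordan_entry g f n k.-1
      + \sum_(j < n.+1) b j * riordan_entry g f (n - j)%N (k + j)%N.

Definition in_R02 (K : nzRingType) (g f : fps K) : Prop :=
  forall a : nat -> K, is_Aseq f a -> a 0%N = 1 /\ a 2%N = 0.

From mathcomp Require Import all_boot all_order all_algebra.
From mathcomp Require Import ring zify.
Set Implicit Arguments.
Unset Strict Implicit.
Unset Printing Implicit Defensive.
Import GRing.Theory.
Local Open Scope ring_scope.

(* As f(0) = 0
   forces d_{n,k} = 0 for n < k, its rows n = 0, 1, 2 give f_1 = 1, f_2 = b_0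
   and f_3 = f_2^2. Reading f(t) = t A(f(t)) at t, t^2, t^3 gives f_1 = a_0,
   f_2 = a_1 f_1 and f_3 = a_1 f_2 + a_2 f_1^2, whence a_0 = 1, a_1 = f_2 and
   a_2 = 0. *)

Section FpsCoefficients.
Variable K : nzRingType.
Implicit Types p q : fps K.

Lemma fps_mul1 p q : fps_mul p q 1%N = p 0%N * q 1%N + p 1%N * q 0%N.
Proof. by rewrite /fps_mul !big_ord_recr big_ord0 /= add0r. Qed.

Lemma fps_mul2 p q :
  fps_mul p q 2%N = p 0%N * q 2%N + p 1%N * q 1%N + p 2%N * q 0%N.
Proof. by rewrite /fps_mul !big_ord_recr big_ord0 /= add0r. Qed.

Lemma fps_mul3 p q :
  fps_mul p q 3%N =
    p 0%N * q 3%N + p 1%N * q 2%N + p 2%N * q 1%N + p 3%N * q 0%N.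
Proof. by rewrite /fps_mul !big_ord_recr big_ord0 /= add0r. Qed.

Lemma fps_mulr1 p : fps_mul p (fps_one K) =1 p.
Proof.
move=> n; rewrite /fps_mul big_ord_recr /= subnn /fps_one eqxx mulr1.
rewrite big1 ?add0r // => i _.
by rewrite subn_eq0 leqNgt ltn_ord mulr0.
Qed.

Lemma fps_exp1 p : fps_exp p 1 =1 p.
Proof. exact: fps_mulr1. Qed.

Lemma fps_exp_lt p k n : p 0%N = 0 -> (n < k)%N -> fps_exp p k n = 0.
Proof.
move=> p0; elim: k n => [|k IHk] n //= ltnk.
rewrite /fps_mul big1 // => -[[|i] /= lein] _; first by rewrite p0 mul0r.
by rewrite IHk ?mulr0 //; lia.
Qed.

Lemma fps_exp_diag p k : p 0%N = 0 -> fps_exp p k k = p 1%N ^+ k.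
Proof.
move=> p0; elim: k => [|k IHk]; first by rewrite expr0 /= /fps_one.
rewrite /= /fps_mul big_ord_recl p0 mul0r add0r big_ord_recl /= /bump /=.
rewrite subn1 /= IHk exprS big1 ?addr0 // => -[i /= ltik] _.
by rewrite fps_exp_lt ?mulr0 //; lia.
Qed.

End FpsCoefficients.

Section RiordanEntries.
Variables (K : nzRingType) (g f : fps K).

Lemma riordan_entry_col0 n : riordan_entry g f n 0 = g n.
Proof. exact: fps_mulr1. Qed.

Lemma riordan_entry_col1 n : riordan_entry g f n 1 = fps_mul g f n.
Proof.
by rewrite /riordan_entry; apply: eq_bigr => i _; rewrite fps_exp1.
Qed.

Lemma riordan_entry_lt n k : f 0%N = 0 -> (n < k)%N -> riordan_entry g f n k = 0.
Proof.
move=> f0 ltnk; rewrite /riordan_entry /fps_mul big1 // => i _.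
by rewrite fps_exp_lt ?mulr0 //; lia.
Qed.

End RiordanEntries.

Section TypeIBsequence.
Variables (K : comNzRingType) (g f : fps K) (b : nat -> K).
Hypotheses (g0 : g 0%N = 1) (f0 : f 0%N = 0) (hB : is_typeI_Bseq g f b).

Lemma typeI_Bseq_coef1 : f 1%N = 1.
Proof.
have := @hB 0%N 1%N isT.
rewrite big_ord1 (riordan_entry_lt g f0 (_ : 0 < 1)%N) //.
by rewrite riordan_entry_col1 riordan_entry_col0 fps_mul1 g0 f0 !(mul1r, mulr0, addr0).
Qed.

Lemma typeI_Bseq_coef2 : f 2%N = b 0%N.
Proof.
have := @hB 1%N 1%N isT.
rewrite !big_ord_recr big_ord0 /= (riordan_entry_lt g f0 (_ : 0 < 2)%N) //.
rewrite !riordan_entry_col1 riordan_entry_col0 fps_mul1 fps_mul2.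
rewrite g0 f0 typeI_Bseq_coef1 !(mul1r, mulr1, mulr0, addr0, add0r).
by rewrite addrC => /addrI.
Qed.

Lemma typeI_Bseq_coef3 : f 3%N = f 2%N * f 2%N.
Proof.
have := @hB 2%N 1%N isT.
rewrite !big_ord_recr big_ord0 /=.
rewrite (riordan_entry_lt g f0 (_ : 1 < 2)%N) // (riordan_entry_lt g f0 (_ : 0 < 3)%N) //.
rewrite !riordan_entry_col1 riordan_entry_col0 fps_mul2 fps_mul3.
rewrite g0 f0 typeI_Bseq_coef1 -typeI_Bseq_coef2 !(mul1r, mulr1, mulr0, addr0, add0r).
by move=> e; apply: (addIr (g 1%N * f 2%N + g 2%N)); rewrite addrA e; ring.
Qed.

End TypeIBsequence.

Section Asequence.
Variables (K : nzRingType) (f : fps K) (a : nat -> K).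
Hypothesis hA : is_Aseq f a.

Lemma Aseq_coef1 : f 1%N = a 0%N.
Proof. by rewrite hA.2 big_ord1 /= /fps_one eqxx mulr1. Qed.

Lemma Aseq_coef2 : f 2%N = a 1%N * f 1%N.
Proof.
rewrite hA.2 !big_ord_recr big_ord0 /= fps_mulr1 /fps_one /=.
by rewrite mulr0 !add0r.
Qed.

Lemma Aseq_coef3 : f 3%N = a 1%N * f 2%N + a 2%N * (f 1%N * f 1%N).
Proof.
rewrite hA.2 !big_ord_recr big_ord0 /= -/(fps_exp f 2) fps_mulr1.
by rewrite fps_exp_diag ?hA.1 // /fps_one /= mulr0 !add0r expr2.
Qed.

End Asequence.

Theorem theorem4p3 (K : numFieldType) (g f : fps K) :
  is_riordan g f ->
  (exists b : nat -> K, is_typeI_Bseq g f b) ->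
  in_R02 g f.
Proof.
move=> [g0 [f0 _]] [b hB] a hA.
have f1E := typeI_Bseq_coef1 g0 f0 hB.
have a1E : a 1%N = f 2%N by rewrite (Aseq_coef2 hA) f1E mulr1.
split; first by rewrite -(Aseq_coef1 hA).
have := Aseq_coef3 hA.
rewrite (typeI_Bseq_coef3 g0 f0 hB) a1E f1E !mulr1 -{1}[_ * _]addr0.
by move=> /addrI ->.
Qed.
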